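(* Every permutation class containing only finitely many simple permutations is partially well-ordered under the pattern containment order, i.e. it contains no infinite antichain.
   Context: A permutation $\pi$ contains $\sigma$ ($\sigma\le\pi$) if some subsequence of $\pi$ has the same relative order as $\sigma$; this is a partial order on all finite permutations. A permutation class is a downset under $\le$. An antichain is a set of pairwise incomparable permutations. An interval of a permutation is a set of contiguous positions whose values form a contiguous set; a permutation of length $n$ is simple if its only intervals have sizes $0,1,n$. *)

(* Permutations of length n are sequences of nat that are
   rearrangements of [:: 0; 1; ...; n-1] (one-line notation, 0-based). *)
From mathcomp Require Import all_boot.
Set Implicit Arguments. Unset Strict Implicit. Unset Printing Implicit Defensive.

Definition is_perm (s : seq nat) : Prop := perm_eq s (iota 0 (size s)).

Definition same_pattern (t u : seq nat) : Prop :=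
  size t = size u /\
  forall i j, i < size t -> j < size t ->
    (nth 0 t i < nth 0 t j) = (nth 0 u i < nth 0 u j).

Definition contains (pi sigma : seq nat) : Prop :=
  exists t, subseq t pi /\ same_pattern t sigma.

Definition perm_class (C : seq nat -> Prop) : Prop :=
  (forall pi, C pi -> is_perm pi) /\
  (forall pi sigma, C pi -> is_perm sigma -> contains pi sigma -> C sigma).

Definition is_interval (s : seq nat) (i j : nat) : Prop :=
  i <= j /\ j <= size s /\
  exists a, perm_eq (take (j - i) (drop i s)) (iota a (j - i)).

Definition simple (s : seq nat) : Prop :=
  is_perm s /\
  forall i j, is_interval s i j ->
    j - i = 0 \/ j - i = 1 \/ j - i = size s.

Definition has_infinite_antichain (C : seq nat -> Prop) : Prop :=
  exists f : nat -> seq nat,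
    (forall n, C (f n)) /\
    (forall m n, m <> n -> ~ contains (f n) (f m)).

From mathcomp Require Import all_boot zify.
From Stdlib Require Import Lia Classical ClassicalEpsilon.
Set Implicit Arguments. Unset Strict Implicit. Unset Printing Implicit Defensive.

(* A decomposition of pi cuts its positions into
   k consecutive blocks, each occupying a contiguous range of values; the
   skeleton records the relative order of the blocks and the components the
   patterns inside them.  A decomposition with k >= 2 blocks and k minimal has a
   simple skeleton, because an interval of the skeleton would allow merging
   blocks.  Conversely, equal skeletons together with blockwise embeddings of
   the components glue into an embedding of the whole permutations.

   The theorem follows by Nash-Williams' minimal bad sequence argument: an
   infinite antichain of C is a bad sequence, so there is a bad sequence h that
   is length-minimal at every index.  Permutations of C that embed into some
   h n and are shorter than it form a well-quasi-order (minimal_bad_below); the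
   components of the h n are such permutations, while their skeletons are
   simple members of C, hence belong to the finite list L.  Closure of
   well-quasi-orders under finite products gives i < j with equal skeletons and
   componentwise embeddings, so h i embeds into h j: a contradiction. *)

Lemma least_witness (P : nat -> Prop) :
  (exists n, P n) -> exists n, P n /\ forall m, P m -> n <= m.
Proof.
move=> [n Pn]; apply: NNPP => no_least.
have none m : ~ P m.
  elim/ltn_ind: m => m IH Pm; apply: no_least; exists m; split => // m' Pm'.
  by rewrite leqNgt; apply/negP => /IH.
exact: none Pn.
Qed.

Lemma choice_on (A B : Type) (b0 : B) (P : A -> Prop) (Q : A -> B -> Prop) :
  (forall a, P a -> exists b, Q a b) -> exists f : A -> B, forall a, P a -> Q a (f a).
Proof.
move=> H; exists (fun a => epsilon (inhabits b0) (fun b => P a -> Q a b)).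
move=> a Pa; apply: (epsilon_spec (inhabits b0) (fun b => P a -> Q a b)) => //.
by have [b Qb] := H a Pa; exists b.
Qed.

Definition increasing_on (m : nat) (f : nat -> nat) : Prop :=
  forall x y, x < y -> y < m -> f x < f y.

Definition embedding (s p : seq nat) (f : nat -> nat) : Prop :=
  [/\ increasing_on (size s) f, (forall x, x < size s -> f x < size p) &
      forall x y, x < size s -> y < size s ->
        (nth 0 s x < nth 0 s y) = (nth 0 p (f x) < nth 0 p (f y))].

Definition embeds (s p : seq nat) : Prop := exists f, embedding s p f.

Lemma embeds_trans (s p q : seq nat) : embeds s p -> embeds p q -> embeds s q.
Proof.
move=> [f [f_inc f_rng f_cmp]] [g [g_inc g_rng g_cmp]].
exists (g \o f); split => [x y xy ys | x xs | x y xs ys] /=.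
- by apply: g_inc; [apply: f_inc | apply: f_rng].
- exact/g_rng/f_rng.
- by rewrite f_cmp // g_cmp ?f_rng.
Qed.

Lemma embeds_small (s p : seq nat) : size s <= 1 -> size s <= size p -> embeds s p.
Proof.
move=> s1 sp; exists id; split => [x y | x | x y] /=; [lia | lia |].
move=> xs ys; have -> : x = y by lia.
by rewrite !ltnn.
Qed.

Lemma sorted_subseq_iota (t : seq nat) n :
  sorted ltn t -> all (gtn n) t -> subseq t (iota 0 n).
Proof.
move=> t_sorted t_bnd.
have -> : t = filter (mem t) (iota 0 n).
  apply: (irr_sorted_eq ltn_trans ltnn) => //.
    exact/sorted_filter/iota_ltn_sorted/ltn_trans.
  move=> x; rewrite mem_filter mem_iota add0n /=.
  by case xt: (x \in t) => //=; apply/esym/(allP t_bnd).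
exact: filter_subseq.
Qed.

Lemma embeds_contains (s p : seq nat) : embeds s p -> contains p s.
Proof.
move=> [f [f_inc f_rng f_cmp]].
exists [seq nth 0 p i | i <- mkseq f (size s)]; split.
- rewrite -{2}(mkseq_nth 0 p); apply: map_subseq; apply: sorted_subseq_iota.
    rewrite sorted_pairwise; last exact: ltn_trans.
    by apply/(pairwiseP 0) => i j; rewrite size_mkseq => /= ilt jlt ij; rewrite !nth_mkseq ?f_inc.
  apply/allP => y /mapP [x]; rewrite mem_iota add0n => /andP [_ xs] ->.
  exact: f_rng.
- split => [|i j]; rewrite size_map size_mkseq // => ilt jlt.
  by rewrite (nth_map 0) ?size_mkseq // (nth_map 0) ?size_mkseq // !nth_mkseq // f_cmp.
Qed.

Lemma is_perm_uniq (s : seq nat) : is_perm s -> uniq s.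
Proof. by move/perm_uniq ->; apply: iota_uniq. Qed.

Definition std (s : seq nat) : seq nat := [seq count (fun y => y < x) s | x <- s].

Lemma size_std (s : seq nat) : size (std s) = size s.
Proof. exact: size_map. Qed.

Lemma count_lt_mono (s : seq nat) a b : a < b -> a \in s ->
  count (fun y => y < a) s < count (fun y => y < b) s.
Proof.
move=> ab; elim: s => [|c s IH] //=; rewrite inE => /orP [/eqP ca | a_s].
- have : count (fun y => y < a) s <= count (fun y => y < b) s.
    by apply: sub_count => y /= ya; apply: ltn_trans ya ab.
  by rewrite -ca ltnn ab /=; lia.
- have : ((c < a) : nat) <= (c < b) by case ca: (c < a); rewrite // (ltn_trans ca ab).
  by have := IH a_s; lia.
Qed.

Lemma std_cmp (s : seq nat) x y : x < size s -> y < size s ->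
  (nth 0 (std s) x < nth 0 (std s) y) = (nth 0 s x < nth 0 s y).
Proof.
move=> xs ys; rewrite !(nth_map 0) //.
case: (ltnP (nth 0 s x) (nth 0 s y)) => ab; first by apply/count_lt_mono/mem_nth.
by apply/negbTE; rewrite -leqNgt; apply: sub_count => z /= zb; apply: leq_trans zb ab.
Qed.

Lemma std_perm (s : seq nat) : uniq s -> is_perm (std s).
Proof.
move=> s_uniq; have std_uniq : uniq (std s).
  rewrite map_inj_in_uniq // => a b a_s b_s eq_ab; apply/eqP.
  case: (ltngtP a b) => // ab.
  - by have := count_lt_mono ab a_s; rewrite eq_ab ltnn.
  - by have := count_lt_mono ab b_s; rewrite eq_ab ltnn.
rewrite /is_perm uniq_perm ?iota_uniq //.
apply: (uniq_min_size std_uniq _ _).2; last by rewrite size_iota.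
move=> _ /mapP [a a_s ->]; rewrite mem_iota size_std /=.
rewrite -(count_predC (fun y => y < a) s).
have : 0 < count (predC (fun y => y < a)) s.
  by rewrite -has_count; apply/hasP; exists a => //=; rewrite ltnn.
lia.
Qed.

Definition pattern_at (pi : seq nat) (g : nat -> nat) (m : nat) : seq nat :=
  std (mkseq (fun x => nth 0 pi (g x)) m).

Lemma size_pattern_at (pi : seq nat) g m : size (pattern_at pi g m) = m.
Proof. by rewrite size_std size_mkseq. Qed.

Lemma pattern_at_cmp (pi : seq nat) g m x y : x < m -> y < m ->
  (nth 0 (pattern_at pi g m) x < nth 0 (pattern_at pi g m) y) =
  (nth 0 pi (g x) < nth 0 pi (g y)).
Proof. by move=> xm ym; rewrite std_cmp ?size_mkseq // !nth_mkseq. Qed.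

Section PatternAt.
Variables (pi : seq nat) (g : nat -> nat) (m : nat).
Hypotheses (g_inc : increasing_on m g) (g_rng : forall x, x < m -> g x < size pi).

Lemma pattern_at_perm : uniq pi -> is_perm (pattern_at pi g m).
Proof.
move=> pi_uniq; apply: std_perm; apply/mkseq_uniqP => x y xm ym.
move/eqP; rewrite nth_uniq ?g_rng // => /eqP gxy.
case: (ltngtP x y) => // xy.
- by have := g_inc xy ym; rewrite gxy ltnn.
- by have := g_inc xy xm; rewrite gxy ltnn.
Qed.

Lemma pattern_at_embeds : embeds (pattern_at pi g m) pi.
Proof.
exists g; rewrite /embedding size_pattern_at; split => //.
exact: pattern_at_cmp.
Qed.

End PatternAt.

Definition convex_block (pi : seq nat) (lo hi : nat) : Prop :=
  forall x y z, lo <= x < hi -> lo <= y < hi -> z < size pi -> ~~ (lo <= z < hi) ->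
    ~~ (nth 0 pi x < nth 0 pi z < nth 0 pi y).

Lemma convex_block_cmp (pi : seq nat) lo hi a b c : uniq pi -> convex_block pi lo hi ->
  hi <= size pi -> lo <= a < hi -> lo <= b < hi -> c < size pi -> ~~ (lo <= c < hi) ->
  ((nth 0 pi a < nth 0 pi c) = (nth 0 pi b < nth 0 pi c)) /\
  ((nth 0 pi c < nth 0 pi a) = (nth 0 pi c < nth 0 pi b)).
Proof.
move=> pi_uniq cv hi_pi ha hb c_pi hc.
have neq_c d : lo <= d < hi -> nth 0 pi d <> nth 0 pi c.
  move=> hd; have d_pi : d < size pi by lia.
  move/eqP; rewrite nth_uniq //.
  by move/eqP=> dc; rewrite -dc hd in hc.
have := neq_c a ha; have := neq_c b hb.
have := cv a b c ha hb c_pi hc; have := cv b a c hb ha c_pi hc.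
by move=> h1 h2 h3 h4; split; apply/idP/idP; lia.
Qed.

Definition decomposition (pi : seq nat) (k : nat) (bnd : nat -> nat) : Prop :=
  [/\ bnd 0 = 0, bnd k = size pi, (forall p, p < k -> bnd p < bnd p.+1)
    & (forall p, p < k -> convex_block pi (bnd p) (bnd p.+1))].

(* The relative order of the blocks, read off their first entries. *)
Definition skeleton (pi : seq nat) (k : nat) (bnd : nat -> nat) : seq nat :=
  pattern_at pi bnd k.

Definition component (pi : seq nat) (bnd : nat -> nat) (p : nat) : seq nat :=
  pattern_at pi (addn (bnd p)) (bnd p.+1 - bnd p).

Lemma trivial_decomposition (pi : seq nat) : decomposition pi (size pi) id.
Proof.
split => // p _ x y z hx hy _ _.
have [-> ->] : x = p /\ y = p by lia.
lia.
Qed.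

Section Decomposition.
Variables (pi : seq nat) (k : nat) (bnd : nat -> nat).
Hypothesis dec : decomposition pi k bnd.

Lemma bnd_lt p q : p < q -> q <= k -> bnd p < bnd q.
Proof.
have [_ _ step _] := dec; move=> pq qk.
apply: (homo_ltn_in (D := [pred i | i <= k]) (f := bnd) (r := fun a b => a < b)) => /=.
- exact: ltn_trans.
- by move=> i j _ j_k m /andP [_ mj]; rewrite !inE in j_k *; lia.
- by move=> i _; rewrite inE; apply: step.
- by rewrite inE; lia.
- exact: qk.
- exact: pq.
Qed.

Lemma bnd_le p q : p <= q -> q <= k -> bnd p <= bnd q.
Proof.
rewrite leq_eqVlt => /orP [/eqP -> // | pq] qk.
exact/ltnW/bnd_lt.
Qed.

Lemma bnd_size p : p <= k -> bnd p <= size pi.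
Proof. by have [_ <- _ _] := dec; move/bnd_le; apply. Qed.

Lemma block_between p x i j : p < k -> bnd p <= x < bnd p.+1 -> i <= j <= k ->
  (bnd i <= x < bnd j) = (i <= p < j).
Proof.
move=> pk hx /andP [ij jk].
have -> : (bnd i <= x) = (i <= p).
  case: (leqP i p) => ip; first by have := bnd_le ip (ltnW pk); lia.
  by have := bnd_le ip (leq_trans ij jk); lia.
case: (ltnP p j) => pj; first by have := bnd_le pj jk; lia.
by have := bnd_le pj (ltnW pk); lia.
Qed.

Lemma block_exists x : x < size pi -> exists p, p < k /\ bnd p <= x < bnd p.+1.
Proof.
have [b0 bk _ _] := dec; move=> x_pi.
have k_pos : 0 < k by case: k bk => // bk; move: x_pi; rewrite -bk b0.
have ex : exists p, x < bnd p.+1 by exists k.-1; rewrite prednK // bk.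
case: (ex_minnP ex) => p xp p_min; exists p; split.
- by have := p_min k.-1; rewrite prednK // bk => /(_ x_pi); lia.
- rewrite xp andbT; case: p xp p_min => [|p] _ p_min; first by rewrite b0.
  by rewrite leqNgt; apply/negP => /p_min; lia.
Qed.

Lemma block_unique p q x : p < k -> q < k ->
  bnd p <= x < bnd p.+1 -> bnd q <= x < bnd q.+1 -> p = q.
Proof.
move=> pk qk hp; rewrite (block_between pk hp); last by apply/andP; split.
lia.
Qed.

Lemma bnd_increasing : increasing_on k bnd.
Proof. by move=> x y xy yk; apply: bnd_lt; lia. Qed.

Lemma bnd_range x : x < k -> bnd x < size pi.
Proof. by have [_ _ step _] := dec; move=> xk; have := bnd_size xk; have := step x xk; lia. Qed.

Lemma size_component p : size (component pi bnd p) = bnd p.+1 - bnd p.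
Proof. exact: size_pattern_at. Qed.

Lemma component_range p x : p < k -> x < bnd p.+1 - bnd p -> bnd p + x < size pi.
Proof. by move=> pk; have := bnd_size pk; lia. Qed.

Lemma component_embeds p : p < k -> embeds (component pi bnd p) pi.
Proof. by move=> pk; apply: pattern_at_embeds => [x y|x]; [lia | apply: component_range]. Qed.

Lemma skeleton_embeds : embeds (skeleton pi k bnd) pi.
Proof. exact/pattern_at_embeds/bnd_range/bnd_increasing. Qed.

Lemma size_component_lt p : 2 <= k -> p < k -> size (component pi bnd p) < size pi.
Proof.
have [b0 bk _ _] := dec; move=> k2 pk; rewrite size_component.
case: p pk => [|p] pk; first by have := bnd_lt k2 (leqnn k); lia.
have := bnd_lt (isT : 0 < p.+1) (ltnW pk); have := bnd_lt (ltnSn p.+1) pk.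
by have := bnd_size pk; lia.
Qed.

Hypothesis pi_uniq : uniq pi.

Lemma skeleton_perm : is_perm (skeleton pi k bnd).
Proof. exact/pattern_at_perm/pi_uniq/bnd_range/bnd_increasing. Qed.

Lemma component_perm p : p < k -> is_perm (component pi bnd p).
Proof. by move=> pk; apply: pattern_at_perm => // [x y|x]; [lia | apply: component_range]. Qed.

Lemma cross_block_cmp u t x y : u < k -> t < k -> u != t ->
  bnd u <= x < bnd u.+1 -> bnd t <= y < bnd t.+1 ->
  (nth 0 pi x < nth 0 pi y) = (nth 0 pi (bnd u) < nth 0 pi (bnd t)).
Proof.
have [_ _ step convex] := dec; move=> uk tk /eqP ut hx hy.
have in_block p : p < k -> bnd p <= bnd p < bnd p.+1 by move=> pk; rewrite leqnn step.
have y_out : ~~ (bnd u <= y < bnd u.+1).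
  by apply/negP => hyu; apply: ut; apply: block_unique hyu hy.
have u_out : ~~ (bnd t <= bnd u < bnd t.+1).
  by apply/negP => hut; apply: ut; apply: block_unique (in_block u uk) hut.
rewrite (convex_block_cmp pi_uniq (convex u uk) (bnd_size uk) hx (in_block u uk) _ y_out).1.
  have u_pi := bnd_range uk.
  by rewrite (convex_block_cmp pi_uniq (convex t tk) (bnd_size tk) hy (in_block t tk) u_pi u_out).2.
by have := bnd_size tk; lia.
Qed.

End Decomposition.

Lemma mem_slice (s : seq nat) i j z : uniq s -> j <= size s -> z < size s ->
  (nth 0 s z \in take (j - i) (drop i s)) = (i <= z < j).
Proof.
move=> s_uniq js zs.
have size_w : size (take (j - i) (drop i s)) = j - i by rewrite size_takel // size_drop; lia.
apply/idP/idP.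
- case/(nthP 0) => e; rewrite size_w => e_lt.
  have ie_s : i + e < size s by lia.
  rewrite nth_take // nth_drop => /eqP; rewrite nth_uniq // => /eqP <-; lia.
- move=> hz; apply/(nthP 0); exists (z - i); first by rewrite size_w; lia.
  by rewrite nth_take ?nth_drop; [congr nth; lia | lia].
Qed.

Lemma interval_convex (s : seq nat) i j : uniq s -> is_interval s i j -> convex_block s i j.
Proof.
move=> s_uniq [_ [js [a perm_w]]] x y z hx hy zs hz.
have value d : d < size s -> (a <= nth 0 s d < a + (j - i)) = (i <= d < j).
  by move=> ds; rewrite -mem_iota -(perm_mem perm_w) mem_slice.
have := value x _; have := value y _; have := value z zs.
rewrite hx hy (negbTE hz); lia.
Qed.

Section Merge.
Variables (pi : seq nat) (k : nat) (bnd : nat -> nat) (i j : nat).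
Hypotheses (dec : decomposition pi k bnd) (ij : i < j) (jk : j <= k).

Lemma merged_block_convex : uniq pi ->
  convex_block (skeleton pi k bnd) i j -> convex_block pi (bnd i) (bnd j).
Proof.
move=> pi_uniq sk_convex x y z hx hy z_pi hz.
have x_pi : x < size pi by have := bnd_size dec jk; lia.
have y_pi : y < size pi by have := bnd_size dec jk; lia.
have [bx [bxk hbx]] := block_exists dec x_pi.
have [by_ [byk hby]] := block_exists dec y_pi.
have [bz [bzk hbz]] := block_exists dec z_pi.
have ijk : i <= j <= k by rewrite (ltnW ij) jk.
rewrite (block_between dec bxk hbx ijk) in hx.
rewrite (block_between dec byk hby ijk) in hy.
rewrite (block_between dec bzk hbz ijk) in hz.
have xz : bx != bz by apply: contraNneq hz => <-.
have zy : bz != by_ by apply: contraNneq hz => ->.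
rewrite (cross_block_cmp dec pi_uniq bxk bzk xz hbx hbz).
rewrite (cross_block_cmp dec pi_uniq bzk byk zy hbz hby).
rewrite -!(@pattern_at_cmp pi bnd k) //.
by apply: sk_convex; rewrite // size_pattern_at.
Qed.

Lemma decomposition_merge : convex_block pi (bnd i) (bnd j) ->
  exists bnd', decomposition pi (k - (j - i)).+1 bnd'.
Proof.
have [b0 bk step convex] := dec; move=> merged.
pose bnd' p := if p <= i then bnd p else bnd (p + (j - i) - 1).
have blocks p : p < (k - (j - i)).+1 -> exists a b, [/\ bnd' p = bnd a, bnd' p.+1 = bnd b &
    (b = a.+1 /\ a < k) \/ (a = i /\ b = j)].
  move=> pk; rewrite /bnd'; case: (ltngtP p i) => hp.
  - by exists p, p.+1; split => //; left; lia.
  - exists (p + (j - i) - 1), (p + (j - i)).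
    by split => //; [congr bnd; lia | left; lia].
  - exists i, j; rewrite hp; split => //; [congr bnd; lia | by right].
exists bnd'; split.
- by rewrite /bnd' leq0n.
- rewrite /bnd' leqNgt ifN; last by lia.
  by rewrite -bk; congr bnd; lia.
- move=> p /blocks [a [b [-> -> [[-> ak] | [-> ->]]]]]; [exact: step | apply: (bnd_lt dec ij jk)].
- move=> p /blocks [a [b [-> -> [[-> ak] | [-> ->]]]]]; [exact: convex | exact: merged].
Qed.

End Merge.

(* A decomposition with the fewest blocks (at least two) has a simple
   skeleton: a nontrivial interval of the skeleton could be merged. *)
Lemma simple_skeleton_exists (pi : seq nat) : uniq pi -> 2 <= size pi ->
  exists k bnd, [/\ 2 <= k, decomposition pi k bnd & simple (skeleton pi k bnd)].
Proof.
move=> pi_uniq pi2.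
have [k [[k2 [bnd dec]] k_min]] :=
  least_witness (ex_intro (fun k => 2 <= k /\ exists bnd, decomposition pi k bnd)
                          (size pi) (conj pi2 (ex_intro _ id (trivial_decomposition pi)))).
exists k, bnd; split => //; split; first exact: skeleton_perm.
move=> i j interval; have [ij [j_sk _]] := interval; rewrite size_pattern_at in j_sk *.
case: (leqP (j - i) 1) => [|ji]; first lia.
case: (leqP k (j - i)) => [|jik]; first lia.
have sk_convex := interval_convex (is_perm_uniq (skeleton_perm dec pi_uniq)) interval.
have ij' : i < j by lia.
have merged := merged_block_convex dec ij' j_sk pi_uniq sk_convex.
have [bnd' dec'] := decomposition_merge dec ij' j_sk merged.
have k'2 : 2 <= (k - (j - i)).+1 by lia.
have := k_min _ (conj k'2 (ex_intro _ bnd' dec')); lia.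
Qed.

Section Glue.
Variables (pi pi' : seq nat) (k : nat) (bnd bnd' : nat -> nat).
Variables (phi : nat -> nat -> nat) (blk : nat -> nat).
Hypotheses (dec : decomposition pi k bnd) (dec' : decomposition pi' k bnd').
Hypothesis phi_emb :
  forall p, p < k -> embedding (component pi bnd p) (component pi' bnd' p) (phi p).
Hypothesis blk_spec :
  forall x, x < size pi -> blk x < k /\ bnd (blk x) <= x < bnd (blk x).+1.

Definition glue (x : nat) : nat := bnd' (blk x) + phi (blk x) (x - bnd (blk x)).

Lemma glue_offset x : x < size pi -> x - bnd (blk x) < size (component pi bnd (blk x)).
Proof. by rewrite size_component => /blk_spec [_]; lia. Qed.

Lemma glue_block x : x < size pi -> bnd' (blk x) <= glue x < bnd' (blk x).+1.
Proof.
move=> x_pi; have [bk _] := blk_spec x_pi; have [_ rng _] := phi_emb bk.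
by have := rng _ (glue_offset x_pi); rewrite !size_component /glue; lia.
Qed.

(* Blocks are laid out in the same order in pi and pi', and phi p is
   increasing inside block p. *)
Lemma glue_increasing : increasing_on (size pi) glue.
Proof.
move=> x y xy y_pi; have x_pi : x < size pi by lia.
have [bxk hx] := blk_spec x_pi; have [byk hy] := blk_spec y_pi.
have gx := glue_block x_pi; have gy := glue_block y_pi.
case: (ltngtP (blk x) (blk y)) => cmp.
- by have := bnd_le dec' cmp (ltnW byk); lia.
- by have := bnd_le dec cmp (ltnW bxk); lia.
- have [inc _ _] := phi_emb bxk.
  have := glue_offset y_pi; rewrite /glue -cmp => oy.
  by rewrite ltn_add2l; apply: inc oy; lia.
Qed.

Lemma glue_range x : x < size pi -> glue x < size pi'.
Proof.
move=> x_pi; have [bk _] := blk_spec x_pi.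
by have := bnd_size dec' bk; have := glue_block x_pi; lia.
Qed.

Hypothesis skeleton_eq : skeleton pi k bnd = skeleton pi' k bnd'.
Hypotheses (pi_uniq : uniq pi) (pi'_uniq : uniq pi').

(* Order is preserved inside a block by phi, across blocks by the skeletons. *)
Lemma glue_cmp x y : x < size pi -> y < size pi ->
  (nth 0 pi x < nth 0 pi y) = (nth 0 pi' (glue x) < nth 0 pi' (glue y)).
Proof.
move=> x_pi y_pi; have [bxk hx] := blk_spec x_pi; have [byk hy] := blk_spec y_pi.
have gx := glue_block x_pi; have gy := glue_block y_pi.
case: (eqVneq (blk x) (blk y)) => cmp.
- have [_ phi_rng phi_cmp] := phi_emb bxk.
  have ox := glue_offset x_pi; have oy := glue_offset y_pi; rewrite -cmp in oy hy.
  have := phi_cmp _ _ ox oy; have := phi_rng _ ox; have := phi_rng _ oy.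
  rewrite /glue -cmp /component !size_pattern_at in ox oy * => py px.
  rewrite !pattern_at_cmp // !subnKC //; lia.
- rewrite (cross_block_cmp dec pi_uniq bxk byk cmp hx hy).
  rewrite (cross_block_cmp dec' pi'_uniq bxk byk cmp gx gy).
  rewrite -(@pattern_at_cmp pi bnd k) // -(@pattern_at_cmp pi' bnd' k) //.
  by move: skeleton_eq; rewrite /skeleton => ->.
Qed.

Lemma glue_embedding : embedding pi pi' glue.
Proof. split; [exact: glue_increasing | exact: glue_range | exact: glue_cmp]. Qed.

End Glue.

Lemma embeds_blockwise (pi pi' : seq nat) k bnd bnd' :
  uniq pi -> uniq pi' -> decomposition pi k bnd -> decomposition pi' k bnd' ->
  skeleton pi k bnd = skeleton pi' k bnd' ->
  (forall p, p < k -> embeds (component pi bnd p) (component pi' bnd' p)) ->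
  embeds pi pi'.
Proof.
move=> pi_uniq pi'_uniq dec dec' skeleton_eq comp_emb.
have [phi phi_emb] := choice_on id comp_emb.
have [blk blk_spec] := choice_on 0 (block_exists dec).
exists (glue bnd bnd' phi blk); exact: (glue_embedding dec dec' phi_emb blk_spec).
Qed.

Definition wqo (T : Type) (R : T -> T -> Prop) (D : T -> Prop) : Prop :=
  forall g : nat -> T, (forall n, D (g n)) -> exists i j, i < j /\ R (g i) (g j).

(* Every sequence in a wqo has a subsequence in which consecutive terms are
   related: either from some point on every term has a later related term,
   or the terms with no later related term form a bad subsequence. *)
Lemma wqo_chain (T : Type) (R : T -> T -> Prop) (D : T -> Prop) (g : nat -> T) :
  wqo R D -> (forall n, D (g n)) ->
  exists phi : nat -> nat, (forall i, phi i < phi i.+1) /\ (forall i, R (g (phi i)) (g (phi i.+1))).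
Proof.
move=> W Dg.
case: (classic (exists N, forall n, N <= n -> exists m, n < m /\ R (g n) (g m))) => [[N HN] | no_N].
  have [next next_spec] := choice_on 0 HN.
  pose phi i := iter i next N.
  have N_phi i : N <= phi i by elim: i => //= i IH; have := (next_spec _ IH).1; lia.
  by exists phi; split => i; have [] := next_spec _ (N_phi i).
have terminal N : exists n, N <= n /\ forall m, n < m -> ~ R (g n) (g m).
  apply: NNPP => no_term; apply: no_N; exists N => n Nn; apply: NNPP => no_succ.
  by apply: no_term; exists n; split => // m nm Rm; apply: no_succ; exists m.
have [t t_spec] := choice _ terminal.
pose psi i := iter i (fun n => t n.+1) (t 0).
have psi_inc i : psi i < psi i.+1 by have := (t_spec (psi i).+1).1; rewrite /psi /=; lia.
have [i [j [ij Rij]]] := W (g \o psi) (fun i => Dg _).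
have [M psi_i] : exists M, psi i = t M by case: (i) => [|i']; [exists 0 | exists (psi i').+1].
have psi_ij : psi i < psi j := homo_ltn (r := fun a b => a < b) ltn_trans psi_inc ij.
by case: ((t_spec M).2 (psi j)); rewrite -psi_i.
Qed.

Lemma wqo_prod (T1 T2 : Type) (R1 : T1 -> T1 -> Prop) (R2 : T2 -> T2 -> Prop) D1 D2 :
  (forall a b c, R1 a b -> R1 b c -> R1 a c) -> wqo R1 D1 -> wqo R2 D2 ->
  wqo (fun a b : T1 * T2 => R1 a.1 b.1 /\ R2 a.2 b.2) (fun a => D1 a.1 /\ D2 a.2).
Proof.
move=> R1_trans W1 W2 g Dg.
have [phi [phi_inc chain]] := wqo_chain (g := fun n => (g n).1) W1 (fun n => (Dg n).1).
have [i [j [ij R2ij]]] := W2 (fun i => (g (phi i)).2) (fun i => (Dg _).2).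
exists (phi i), (phi j); split; first exact: (homo_ltn (r := fun a b => a < b) ltn_trans).
split => //; apply: (homo_ltn (f := fun i => (g (phi i)).1) _ chain ij).
by move=> b a c; apply: R1_trans.
Qed.

Lemma wqo_tuple (T : Type) (d : T) (R : T -> T -> Prop) (D : T -> Prop) (K : nat) :
  (forall a b c, R a b -> R b c -> R a c) -> wqo R D ->
  wqo (fun a b : seq T => forall p, p < K -> R (nth d a p) (nth d b p))
      (fun a => forall p, p < K -> D (nth d a p)).
Proof.
move=> R_trans W; elim: K => [|K IH] g Dg; first by exists 0, 1.
have Dg' n : D (nth d (g n) 0) /\ (forall p, p < K -> D (nth d (behead (g n)) p)).
  by split => [|p pK]; rewrite ?nth_behead; apply: Dg.
have [i [j [ij [R_head R_tail]]]] :=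
  wqo_prod R_trans W IH (g := fun n => (nth d (g n) 0, behead (g n))) Dg'.
exists i, j; split => // -[|p] pK //=.
by have := R_tail p pK; rewrite !nth_behead.
Qed.

Lemma wqo_add_bottom (T : Type) (R : T -> T -> Prop) (D : T -> Prop) (e : T) :
  (forall x, R e x) -> wqo R D -> wqo R (fun x => D x \/ x = e).
Proof.
move=> e_bot W g Dg.
case: (classic (exists n, g n = e)) => [[n gn] | no_e]; first by exists n, n.+1; rewrite gn.
by apply: W => n; case: (Dg n) => // gn; case: no_e; exists n.
Qed.

Lemma wqo_finite (T : eqType) (L : seq T) : wqo (@eq T) (fun s => s \in L).
Proof.
move=> g gL.
have : ~~ uniq (mkseq g (size L).+1).
  apply/negP => g_uniq; suff : (size L).+1 <= size L by rewrite ltnn.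
  rewrite -[X in X <= _](size_mkseq g); apply: uniq_leq_size g_uniq _.
  by move=> _ /mapP [n _ ->].
case/(uniqPn (g 0)) => i [j [ij]]; rewrite size_mkseq => jL.
by rewrite !nth_mkseq //; [exists i, j | lia].
Qed.

Section MinimalBad.
Variables (T : Type) (R : T -> T -> Prop) (D : T -> Prop) (w : T -> nat).

Definition bad (g : nat -> T) : Prop := forall i j, i < j -> ~ R (g i) (g j).

Definition minimal_bad (h : nat -> T) : Prop :=
  [/\ bad h, forall n, D (h n) &
      forall n g, bad g -> (forall m, D (g m)) -> (forall i, i < n -> g i = h i) ->
        w (h n) <= w (g n)].

(* If a bad sequence exists, a minimal one does: build it term by term,
   choosing each time a lightest term that still extends to a bad sequence. *)
Lemma minimal_bad_exists (f : nat -> T) :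
  bad f -> (forall n, D (f n)) -> exists h, minimal_bad h.
Proof.
move=> f_bad Df; pose d := f 0.
pose extends p := exists g, [/\ bad g, forall n, D (g n) & forall i, i < size p -> g i = nth d p i].
have extends_rcons p g : bad g -> (forall n, D (g n)) ->
    (forall i, i < size p -> g i = nth d p i) -> extends (rcons p (g (size p))).
  move=> g_bad Dg gp; exists g; split => // i; rewrite size_rcons nth_rcons ltnS leq_eqVlt.
  by case: ltngtP => // [ip _ | -> _]; first exact: gp.
have lightest p : extends p -> exists x, extends (rcons p x) /\
    forall y, extends (rcons p y) -> w x <= w y.
  case=> g [g_bad Dg gp].
  have [m [[x [wx ext_x]] m_min]] := least_witness
    (ex_intro (fun m => exists x, w x = m /\ extends (rcons p x)) _
       (ex_intro _ (g (size p)) (conj erefl (extends_rcons p g g_bad Dg gp)))).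
  by exists x; split => // y ext_y; rewrite wx; apply: m_min; exists y.
have [next next_spec] := choice_on d lightest.
pose pre n := iter n (fun p => rcons p (next p)) [::].
pose h n := next (pre n).
have size_pre n : size (pre n) = n by elim: n => //= n IH; rewrite size_rcons IH.
have nth_pre n i : i < n -> nth d (pre n) i = h i.
  elim: n => // n IH; rewrite ltnS leq_eqVlt /= nth_rcons size_pre.
  by case: ltngtP => // [ilt _ | -> _]; first exact: IH.
have ext_pre n : extends (pre n) by elim: n => [|n IH]; [exists f | exact: (next_spec _ IH).1].
have agree_h n : exists g, [/\ bad g, forall m, D (g m) & forall i, i <= n -> g i = h i].
  have [g [g_bad Dg gp]] := ext_pre n.+1; exists g; split => // i i_n.
  by rewrite gp ?nth_pre ?size_pre.
exists h; split.
- move=> i j ij; have [g [g_bad _ gh]] := agree_h j.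
  by rewrite -!gh //; [apply: g_bad | lia].
- by move=> n; have [g [_ Dg gh]] := agree_h n; rewrite -gh.
- move=> n g g_bad Dg gh; apply: (next_spec _ (ext_pre n)).2.
  rewrite -[in g _](size_pre n); apply: extends_rcons => // i; rewrite size_pre => i_n.
  by rewrite nth_pre ?gh.
Qed.

(* The elements of D below some h n and lighter than it form a wqo: a bad
   sequence of them could be spliced into h, contradicting minimality. *)
Lemma minimal_bad_below (h : nat -> T) :
  (forall a b c, R a b -> R b c -> R a c) -> minimal_bad h ->
  wqo R (fun b => D b /\ exists n, R b (h n) /\ w b < w (h n)).
Proof.
move=> R_trans [h_bad Dh h_min] q q_below; apply: NNPP => q_no_good.
have q_bad : bad q by move=> i j ij Rij; apply: q_no_good; exists i, j.
have [nu nu_spec] := choice _ (fun m => (q_below m).2).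
have [N [[m0 <-] N_min]] :=
  least_witness (ex_intro (fun N => exists m, nu m = N) _ (ex_intro _ 0 erefl)).
pose g i := if i < nu m0 then h i else q (m0 + (i - nu m0)).
have g_bad : bad g.
  move=> i j ij; rewrite /g; case: (ltnP i (nu m0)) => iN; case: (ltnP j (nu m0)) => jN.
  - exact: h_bad.
  - move=> Rij; set m := m0 + (j - nu m0); have [Rq _] := nu_spec m.
    apply: (h_bad i (nu m)); last exact: R_trans Rij Rq.
    by have := N_min (nu m) (ex_intro _ m erefl); lia.
  - lia.
  - by apply: q_bad; lia.
have Dg m : D (g m) by rewrite /g; case: ifP => _; [apply: Dh | apply: (q_below _).1].
have g_agree i : i < nu m0 -> g i = h i by rewrite /g => ->.
have := h_min (nu m0) g g_bad Dg g_agree; rewrite /g ltnn subnn addn0.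
by have [_ w_lt] := nu_spec m0; lia.
Qed.
End MinimalBad.

Lemma bad_size_ge2 (h : nat -> seq nat) n : bad embeds h -> 2 <= size (h n).
Proof.
move=> h_bad; case: (leqP 2 (size (h n))) => // small; exfalso.
case: (leqP (size (h n)) (size (h n.+1))) => grow.
- by apply: (h_bad n n.+1) => //; apply: embeds_small; lia.
- by apply: (h_bad n.+1 n.+2) => //; apply: embeds_small; lia.
Qed.

Lemma decompose_sequence (h : nat -> seq nat) :
  (forall n, uniq (h n) /\ 2 <= size (h n)) ->
  exists (k : nat -> nat) (bnd : nat -> nat -> nat), forall n,
    [/\ 2 <= k n, decomposition (h n) (k n) (bnd n) & simple (skeleton (h n) (k n) (bnd n))].
Proof.
move=> h_ok.
have kb_ex n : exists kb : nat * (nat -> nat),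
    [/\ 2 <= kb.1, decomposition (h n) kb.1 kb.2 & simple (skeleton (h n) kb.1 kb.2)].
  have [h_uniq h2] := h_ok n.
  by have [k [bnd spec]] := simple_skeleton_exists h_uniq h2; exists (k, bnd).
have [kb kb_spec] := choice _ kb_ex.
by exists (fun n => (kb n).1), (fun n => (kb n).2).
Qed.

Lemma embeds_nil (s : seq nat) : embeds [::] s.
Proof. exact: embeds_small. Qed.

Lemma class_skeleton (C : seq nat -> Prop) pi k bnd :
  perm_class C -> C pi -> decomposition pi k bnd -> C (skeleton pi k bnd).
Proof.
move=> [C_perm C_down] C_pi dec; have pi_uniq := is_perm_uniq (C_perm _ C_pi).
exact: C_down C_pi (skeleton_perm dec pi_uniq) (embeds_contains (skeleton_embeds dec)).
Qed.

Lemma class_component (C : seq nat -> Prop) pi k bnd p :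
  perm_class C -> C pi -> decomposition pi k bnd -> p < k -> C (component pi bnd p).
Proof.
move=> [C_perm C_down] C_pi dec pk; have pi_uniq := is_perm_uniq (C_perm _ C_pi).
exact: C_down C_pi (component_perm dec pi_uniq pk) (embeds_contains (component_embeds dec pk)).
Qed.

(* A class with finitely many simple permutations has no bad sequence.  The
   code of h n is its skeleton together with the list of its components. *)
Lemma no_bad_sequence (C : seq nat -> Prop) (L : seq (seq nat)) :
  perm_class C -> (forall pi, C pi -> simple pi -> pi \in L) ->
  forall f, (forall n, C (f n)) -> ~ bad embeds f.
Proof.
move=> C_class L_simple f Cf f_bad.
have [h h_min] := minimal_bad_exists size f_bad Cf.
have [h_bad Ch _] := h_min.
have W_below := minimal_bad_below embeds_trans h_min.
have h_uniq n : uniq (h n) := is_perm_uniq (C_class.1 _ (Ch n)).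
have [k [bnd dec_h]] := decompose_sequence (fun n => conj (h_uniq n) (bad_size_ge2 n h_bad)).
pose K := \max_(s <- L) size s.
pose code n := (skeleton (h n) (k n) (bnd n), mkseq (component (h n) (bnd n)) (k n)).
have code_ok n : (code n).1 \in L /\ forall p, p < K ->
    (C (nth [::] (code n).2 p) /\ exists m, embeds (nth [::] (code n).2 p) (h m) /\
       size (nth [::] (code n).2 p) < size (h m)) \/ nth [::] (code n).2 p = [::].
  have [k2 dec simple_sk] := dec_h n.
  split; first exact: L_simple (class_skeleton C_class (Ch n) dec) _.
  move=> p pK; rewrite /code /=; case: (leqP (k n) p) => pk.
    by right; rewrite nth_default ?size_mkseq.
  left; rewrite nth_mkseq //; split; first exact: class_component C_class (Ch n) dec pk.
  by exists n; split; [exact: (component_embeds dec pk) | exact: (size_component_lt dec k2 pk)].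
have W_components :=
  wqo_tuple (d := [::]) (K := K) embeds_trans (wqo_add_bottom embeds_nil W_below).
have W_code := wqo_prod (@eq_trans _) (wqo_finite (L := L)) W_components.
have [i [j [ij [sk_eq comp_emb]]]] := W_code code code_ok.
have [_ dec_i _] := dec_h i; have [_ dec_j _] := dec_h j.
have k_eq : k j = k i by have := congr1 size sk_eq; rewrite /= !size_pattern_at.
have k_K : k i <= K.
  by rewrite -(size_pattern_at (h i) (bnd i) (k i)); apply: leq_bigmax_seq (code_ok i).1 _.
rewrite k_eq in dec_j; apply: (h_bad i j ij).
apply: (embeds_blockwise (h_uniq i) (h_uniq j) dec_i dec_j).
- by move: sk_eq; rewrite /= k_eq.
- move=> p pk; have := comp_emb p (leq_trans pk k_K).
  by rewrite /= !nth_mkseq ?k_eq.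
Qed.

Theorem mainTheorem6 (C : seq nat -> Prop) :
  perm_class C ->
  (exists L : seq (seq nat), forall pi, C pi -> simple pi -> pi \in L) ->
  ~ has_infinite_antichain C.
Proof.
move=> C_class [L L_simple] [f [Cf antichain]].
apply: (no_bad_sequence C_class L_simple Cf) => i j ij /embeds_contains.
by apply: antichain; lia.
Qed.
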